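(* Let $G=(V,E)$ be a finite simple connected graph with $n=|V|$ vertices and graph distance $d$, and let $\omega\colon V\to(0,\infty)$ be a weight function with total weight $\omega=\omega(V)$. Let $\delta>0$ and $s=\frac{8\ln n}{\delta^2}$. Let $S=\{m_1,\dots,m_s\}$ be a random sample (multiset) of $s$ vertices, drawn independently with $\Pr(m_i=v)=\omega(v)/\omega$, and let $\Phi^{*}(v)=\sum_{u\in S}d(u,v)$. Let $q^{*}=\arg\min_{v\in V}\Phi^{*}(v)$. Then, with probability at least $1-n^{-3}$, $q^{*}$ is $\delta$-close to a median, i.e. $\Lambda(q^{*})\le(\frac12+\delta)\omega$.
   Context: For vertices $q,v$, a vertex $u$ is consistent with $(q,v)$ if $q=v=u$, or $q\ne v$ and $v$ lies on a shortest path between $u$ and $q$; $N(q,v)$ is the set of such $u$. $N(q)$ is the neighbor set of $q$. For $X\subseteq V$, $\omega(X)=\sum_{u\in X}\omega(u)$. $\Lambda(v)=\max_{u\in N(v)}\omega(N(v,u))$. A vertex $q$ is $\delta$-close to a median if $\Lambda(q)\le(\frac12+\delta)\omega(V)$. *)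

From mathcomp Require Import all_boot all_order all_algebra.
From mathcomp Require Import all_classical all_reals all_analysis.
Set Implicit Arguments. Unset Strict Implicit. Unset Printing Implicit Defensive.
Import Order.TTheory GRing.Theory Num.Theory.
Local Open Scope ring_scope.

Section Graph.
Variable V : finType.
Variable e : rel V.

Definition simple_graph := symmetric e /\ irreflexive e.
Definition connected_graph := forall u v : V, connect e u v.

Definition walkb (k : nat) (u v : V) : bool :=
  [exists p : k.-tuple V, path e u p && (last u p == v)].

(* graph distance: least k such that a walk of length k from u to v exists
   (in a connected graph this is < #|V|) *)
Definition dist (u v : V) : nat :=
  find (fun k => walkb k u v) (iota 0 #|V|).

Definition consistent (q v u : V) : bool :=
  ((q == v) && (v == u)) ||
  ((q != v) && (dist u q == (dist u v + dist v q)%N)).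

Variable R : realType.
Variable w : V -> R.

Definition wsum (X : {set V}) : R := \sum_(u in X) w u.
Definition Wtot : R := wsum [set: V].

Definition Lambda (v : V) : R :=
  \big[Order.max/0]_(u | e v u) wsum [set x | consistent v u x].

Definition delta_close (delta : R) (q : V) : Prop :=
  Lambda q <= (2^-1 + delta) * Wtot.

Definition Phi (s : nat) (S : {ffun 'I_s -> V}) (v : V) : nat :=
  (\sum_(i < s) dist (S i) v)%N.

Definition good_sample (delta : R) (s : nat) (S : {ffun 'I_s -> V}) : bool :=
  [forall q : V, [forall v : V, (Phi S q <= Phi S v)%N] ==>
                 (Lambda q <= (2^-1 + delta) * Wtot)].

(* probability of an event under s i.i.d. draws with Pr(m_i = v) = w v / W *)
Definition sample_prob (s : nat) (P : {ffun 'I_s -> V} -> bool) : R :=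
  \sum_(S : {ffun 'I_s -> V} | P S) \prod_(i < s) (w (S i) / Wtot).

End Graph.

(* If q minimizes Phi* and u is a neighbour of q, moving from q to u brings
   every sample point of N(q,u) one step closer and every other one at most one
   step further away, so minimality of q puts at most half of the sample into
   N(q,u).  When w(N(q,u)) > (1/2 + delta) w(V), a Chernoff bound makes this
   happen with probability at most exp(-2 delta^2 s) <= n^-5, and a union bound
   over the at most n^2 pairs (q,u) leaves failure probability n^-3. *)

From mathcomp Require Import all_boot all_order all_algebra.
From mathcomp Require Import all_classical all_reals all_analysis.
From mathcomp Require Import zify lra.
Import Order.TTheory GRing.Theory Num.Theory.
Local Open Scope ring_scope.
Set Implicit Arguments. Unset Strict Implicit.

Section Distance.
Variables (V : finType) (e : rel V).
Implicit Types (u v q x : V) (A : {set V}).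

Lemma dist_leq_card u v : (dist e u v <= #|V|)%N.
Proof. by rewrite /dist -[X in (_ <= X)%N](size_iota 0 #|V|) find_size. Qed.

Lemma dist_leq_walkb k u v :
  (k < #|V|)%N -> walkb e k u v -> (dist e u v <= k)%N.
Proof.
move=> lt_k_V walk_k; rewrite leqNgt; apply/negP => lt_k_dist.
by have := before_find 0%N lt_k_dist; rewrite nth_iota // add0n walk_k.
Qed.

Lemma walkb_dist u v : (dist e u v < #|V|)%N -> walkb e (dist e u v) u v.
Proof.
move=> lt_dist_V.
have: has (fun k => walkb e k u v) (iota 0 #|V|) by rewrite has_find size_iota.
by move=> /(nth_find 0%N); rewrite nth_iota ?add0n.
Qed.

Lemma walkb_rcons k x q v : walkb e k x q -> e q v -> walkb e k.+1 x v.
Proof.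
move=> /existsP [p /andP [p_path /eqP p_last]] e_qv; apply/existsP.
exists [tuple of rcons p v].
by rewrite /= rcons_path p_path p_last e_qv last_rcons eqxx.
Qed.

(* Vertices out of reach sit at the junk distance #|V|, so this needs no
   connectivity. *)
Lemma dist_edge_leqS x q v : e q v -> (dist e x v <= (dist e x q).+1)%N.
Proof.
move=> e_qv; have [lt_dist_V | ge_dist_V] := ltnP (dist e x q) #|V|.
  have walk_v := walkb_rcons (walkb_dist lt_dist_V) e_qv.
  have [lt_V | ge_V] := ltnP (dist e x q).+1 #|V|; first exact: dist_leq_walkb.
  exact: leq_trans (dist_leq_card _ _) ge_V.
exact: leq_trans (dist_leq_card _ _) (leqW ge_dist_V).
Qed.

Lemma dist_gt0 u v : u != v -> (0 < dist e u v)%N.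
Proof.
move=> neq_uv; rewrite lt0n; apply/negP => /eqP dist0.
have V_gt0 : (0 < #|V|)%N by apply/card_gt0P; exists u.
have := @walkb_dist u v; rewrite dist0 => /(_ V_gt0) /existsP [p /andP [_]].
by rewrite (size0nil (size_tuple p)) /= => /eqP uv; rewrite uv eqxx in neq_uv.
Qed.

Lemma consistent_dist_ltn q u x :
  u != q -> consistent e q u x -> (dist e x u < dist e x q)%N.
Proof.
move=> neq_uq; rewrite /consistent eq_sym (negbTE neq_uq) /= => /eqP ->.
by rewrite -addn1 leq_add2l dist_gt0.
Qed.

Definition consistent_set q u : {set V} := [set x | consistent e q u x].

Definition hits s (S : {ffun 'I_s -> V}) A : nat := #|[set i | S i \in A]|.

Lemma Phi_edge_hits s (S : {ffun 'I_s -> V}) q u : e q u -> q != u ->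
  (Phi e S u + 2 * hits S (consistent_set q u) <= Phi e S q + s)%N.
Proof.
move=> e_qu neq_qu; have neq_uq : u != q by rewrite eq_sym.
rewrite /hits -sum1_card big_mkcond /Phi big_distrr -big_split /=.
rewrite -[X in (_ <= _ + X)%N]card_ord -sum1_card -big_split /=.
apply: leq_sum => i _; rewrite !inE.
case cons_i: (consistent e q u (S i)) => /=.
  by have := consistent_dist_ltn neq_uq cons_i; lia.
by have := dist_edge_leqS (S i) e_qu; lia.
Qed.

Lemma argmin_Phi_hits s (S : {ffun 'I_s -> V}) q u :
  (forall v, Phi e S q <= Phi e S v)%N -> e q u -> q != u ->
  (2 * hits S (consistent_set q u) <= s)%N.
Proof.
move=> q_min e_qu neq_qu.
by have := Phi_edge_hits S e_qu neq_qu; have := q_min u; lia.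
Qed.

End Distance.

Definition heavy_edge (V : finType) (e : rel V) (R : realType) (w : V -> R)
    (delta : R) (p : V * V) : bool :=
  e p.1 p.2 && ((2^-1 + delta) * Wtot w < wsum w (consistent_set e p.1 p.2)).

Lemma not_good_sample_few_hits (V : finType) (e : rel V) (R : realType)
    (w : V -> R) (delta : R) s (S : {ffun 'I_s -> V}) :
  irreflexive e -> 0 <= (2^-1 + delta) * Wtot w -> ~~ good_sample e w delta S ->
  [exists (p | heavy_edge e w delta p),
     2 * hits S (consistent_set e p.1 p.2) <= s]%N.
Proof.
move=> e_irr c_ge0 /forallPn [q].
rewrite negb_imply => /andP [/forallP q_min Lambda_gt].
have [u heavy_qu] : exists u, heavy_edge e w delta (q, u).
  apply/existsP; apply: contraNT Lambda_gt => /existsPn light.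
  apply: bigmax_le => // u e_qu.
  by have := light u; rewrite /heavy_edge e_qu -leNgt.
apply/existsP; exists (q, u); rewrite heavy_qu /=.
have e_qu : e q u by case/andP: heavy_qu.
by apply: argmin_Phi_hits => //; apply: contraTneq e_qu => ->; rewrite e_irr.
Qed.

Lemma sum_ffun_prod (I J : finType) (R : comPzSemiRingType) (F : J -> R) :
  \sum_(f : {ffun I -> J}) \prod_i F (f i) = (\sum_j F j) ^+ #|I|.
Proof. by rewrite -(bigA_distr_bigA (fun (i : I) j => F j)) /= prodr_const. Qed.

Lemma ler_sum_pred (I : finType) (R : numDomainType) (P : pred I) (F : I -> R) :
  (forall i, 0 <= F i) -> \sum_(i | P i) F i <= \sum_i F i.
Proof. by move=> F_ge0; rewrite [leRHS](bigID P) /= lerDl sumr_ge0. Qed.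

Section Sampling.
Variables (V : finType) (R : realType) (w : V -> R) (s : nat).
Hypotheses (w_gt0 : forall v, 0 < w v) (V_gt0 : (0 < #|V|)%N).
Implicit Types (S : {ffun 'I_s -> V}) (P Q : pred {ffun 'I_s -> V}).
Implicit Types (A : {set V}).

Lemma Wtot_sum : Wtot w = \sum_v w v.
Proof. by apply: eq_bigl => v; rewrite inE. Qed.

Lemma Wtot_gt0 : 0 < Wtot w.
Proof.
have [v _] := card_gt0P V_gt0; rewrite Wtot_sum (bigD1 v) //=.
by rewrite ltr_pwDl // sumr_ge0 // => u _; apply: ltW.
Qed.

Definition sample_weight S : R := \prod_(i < s) (w (S i) / Wtot w).

Lemma sample_weight_ge0 S : 0 <= sample_weight S.
Proof. by apply: prodr_ge0 => i _; rewrite divr_ge0 // ltW // Wtot_gt0. Qed.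

Lemma sum_sample_weight : \sum_S sample_weight S = 1.
Proof.
rewrite (sum_ffun_prod _ (fun v => w v / Wtot w)) -mulr_suml -Wtot_sum.
by rewrite divff ?expr1n ?card_ord // lt0r_neq0 // Wtot_gt0.
Qed.

Lemma sample_probC P : sample_prob w P = 1 - sample_prob w (predC P).
Proof. by rewrite -sum_sample_weight (bigID P) addrK. Qed.

Lemma le_sample_prob P Q :
  (forall S, P S -> Q S) -> sample_prob w P <= sample_prob w Q.
Proof.
move=> sub_PQ; rewrite /sample_prob [leRHS](bigID P) /=.
have -> : \sum_(S | Q S && P S) sample_weight S = sample_prob w P.
  apply: eq_bigl => S; apply/andP/idP => [[]|P_S] //.
  by split=> //; apply: sub_PQ.
by rewrite lerDl sumr_ge0 // => S _; apply: sample_weight_ge0.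
Qed.

Lemma sample_prob_exists_le (I : finType) (J : pred I)
    (E : I -> pred {ffun 'I_s -> V}) :
  sample_prob w (fun S => [exists (i | J i), E i S])
    <= \sum_(i | J i) sample_prob w (E i).
Proof.
rewrite /sample_prob (exchange_big_dep predT) //=.
apply: le_trans (ler_sum_pred _ _) => [|S]; last first.
  by apply: sumr_ge0 => i _; apply: sample_weight_ge0.
apply: ler_sum => S /existsP [i /andP [J_i E_iS]].
rewrite (bigD1 i) /= ?J_i ?E_iS // lerDl sumr_ge0 // => j _.
exact: sample_weight_ge0.
Qed.

Lemma prod_tilt_ge1 (a : R) S A : 1 <= a -> (2 * hits S A <= s)%N ->
  1 <= \prod_i (if S i \in A then a^-1 else a).
Proof.
move=> a_ge1 few_hits.
have a_neq0 : a != 0 by rewrite gt_eqF // (lt_le_trans ltr01).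
rewrite (bigID (fun i => S i \in A)) /=.
rewrite (eq_bigr (fun=> a^-1)) => [|i ->] //.
rewrite (eq_bigr (fun=> a)) => [|i /negbTE ->] //.
rewrite !prodr_const; set k := #|_| in few_hits *; set m := #|_|.
have k_hits : hits S A = k by apply: eq_card => i; rewrite inE.
have k_add_m : (k + m)%N = s.
  rewrite -[s]card_ord -(cardC [pred i | S i \in A]).
  by congr addn; apply: eq_card.
have k_le_m : (k <= m)%N by lia.
rewrite -(subnKC k_le_m) exprD mulrA exprVn mulVf ?expf_neq0 //.
by rewrite mul1r exprn_ege1.
Qed.

(* The tilt a = 1 + 2 delta is chosen so that the bound is attained at
   p = 1/2 + delta = a/2, where p/a + (1 - p) a = 1 - 2 delta^2. *)
Lemma tilted_mean_le (delta : R) A : 0 <= delta ->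
  (2^-1 + delta) * Wtot w <= wsum w A ->
  \sum_v w v / Wtot w * (if v \in A then (1 + 2 * delta)^-1 else 1 + 2 * delta)
    <= 1 - 2 * delta ^+ 2.
Proof.
move=> delta_ge0 heavy_A; set a := 1 + 2 * delta.
have W_gt0 := Wtot_gt0; have a_gt0 : 0 < a by rewrite /a; lra.
rewrite (bigID (fun v => v \in A)) /=.
rewrite (eq_bigr (fun v => w v / Wtot w * a^-1)) => [|v ->] //.
rewrite [X in _ + X](eq_bigr (fun v => w v / Wtot w * a)) => [|v /negbTE ->] //.
rewrite -!mulr_suml.
have -> : \sum_(v | v \notin A) w v = Wtot w - wsum w A.
  rewrite Wtot_sum [in RHS](bigID (fun v => v \in A)) /=.
  by rewrite /wsum addrAC subrr add0r.
rewrite -/(wsum w A) mulrBl divff ?gt_eqF //; set p := wsum w A / Wtot w.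
have p_ge : 2^-1 + delta <= p by rewrite /p ler_pdivlMr.
have inv_a : a * a^-1 = 1 by rewrite divff ?gt_eqF.
have inv_a_le : a^-1 <= a by rewrite /a in inv_a *; nra.
have : 0 <= (p - 2^-1 - delta) * (a - a^-1) by apply: mulr_ge0; lra.
by rewrite /a in inv_a *; nra.
Qed.

Lemma sample_prob_few_hits_le (delta : R) A : 0 <= delta ->
  (2^-1 + delta) * Wtot w <= wsum w A ->
  sample_prob w (fun S => 2 * hits S A <= s)%N
    <= expR (- (2 * delta ^+ 2)) ^+ s.
Proof.
move=> delta_ge0 heavy_A; set a := 1 + 2 * delta.
pose g v := if v \in A then a^-1 else a.
have g_ge0 v : 0 <= g v by rewrite /g /a; case: ifP; rewrite ?invr_ge0; lra.
have markov : sample_prob w (fun S => 2 * hits S A <= s)%N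
    <= \sum_S sample_weight S * \prod_i g (S i).
  apply: le_trans (ler_sum_pred _ _) => [|S]; last first.
    by rewrite mulr_ge0 ?sample_weight_ge0 ?prodr_ge0.
  apply: ler_sum => S few_hits; rewrite ler_peMr ?sample_weight_ge0 //.
  by apply: prod_tilt_ge1 => //; rewrite /a; lra.
have mgf : \sum_S sample_weight S * \prod_i g (S i)
    = (\sum_v w v / Wtot w * g v) ^+ s.
  rewrite -[s in RHS]card_ord -sum_ffun_prod.
  by apply: eq_bigr => S _; rewrite -big_split.
apply: le_trans markov _; rewrite mgf.
apply: lerXn2r; rewrite ?nnegrE ?expR_ge0 //.
  by apply: sumr_ge0 => v _; rewrite mulr_ge0 // divr_ge0 // ltW // Wtot_gt0.
apply: le_trans (tilted_mean_le delta_ge0 heavy_A) _.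
by have := expR_ge1Dx (- (2 * delta ^+ 2)); lra.
Qed.
End Sampling.

Lemma expR_sample_size_le (R : realType) (n delta : R) (s : nat) : 1 <= n ->
  8 * ln n <= s%:R * delta ^+ 2 -> expR (- (2 * delta ^+ 2)) ^+ s <= n ^- 5.
Proof.
move=> n_ge1 s_large; have ln_ge0 := ln_ge0 n_ge1.
have -> : n = expR (ln n) by rewrite lnK // posrE (lt_le_trans ltr01).
by rewrite -!expRM_natl -expRN ler_expR; nra.
Qed.

Theorem corollary5 (V : finType) (e : rel V) (R : realType) (w : V -> R)
  (delta : R) (s : nat) :
  simple_graph e -> connected_graph e -> (0 < #|V|)%N ->
  (forall v, 0 < w v) ->
  0 < delta ->
  (s%:R - 1 < 8 * ln (#|V|%:R) / delta ^+ 2 <= s%:R) ->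
  sample_prob w (good_sample e w delta (s:=s)) >= 1 - (#|V|%:R) ^- 3.
Proof.
move=> [_ e_irr] _ V_gt0 w_gt0 delta_gt0 /andP [_ s_large].
set n : R := #|V|%:R; have n_ge1 : 1 <= n by rewrite /n ler1n.
have W_gt0 := Wtot_gt0 w_gt0 V_gt0.
have c_ge0 : 0 <= (2^-1 + delta) * Wtot w by apply: mulr_ge0; lra.
have few_hits_le p : heavy_edge e w delta p ->
    sample_prob w (fun S : {ffun 'I_s -> V} =>
      2 * hits S (consistent_set e p.1 p.2) <= s)%N <= n ^- 5.
  move=> /andP [_ /ltW heavy_p].
  have delta_ge0 := ltW delta_gt0.
  apply: le_trans (sample_prob_few_hits_le s w_gt0 V_gt0 delta_ge0 heavy_p) _.
  by apply: expR_sample_size_le; rewrite // -ler_pdivrMr // exprn_gt0.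
have bad_le : sample_prob w (predC (good_sample e w delta (s:=s))) <= n ^- 3.
  apply: le_trans (le_sample_prob w_gt0 V_gt0
    (fun S => not_good_sample_few_hits e_irr c_ge0)) _.
  apply: le_trans (sample_prob_exists_le w_gt0 V_gt0 _ _) _.
  apply: le_trans (ler_sum _ few_hits_le) _.
  apply: le_trans (ler_sum_pred _ _) _ => [p|].
    by rewrite invr_ge0 exprn_ge0 // (le_trans ler01 n_ge1).
  rewrite sumr_const card_prod -mulr_natl natrM -expr2 (_ : 5 = 2 + 3)%N //.
  rewrite exprD invfM mulrA divff ?mul1r //.
  by rewrite expf_neq0 ?gt_eqF // (lt_le_trans ltr01).
by rewrite (sample_probC w_gt0 V_gt0); lra.
Qed.
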